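(* Let $k>8$ be an integer, let $\theta=2\pi/k$, and let $\lambda>0$ be a real number such that $\cos\theta-\sin\theta>\frac{1}{\lambda+1}$. Let $G=(V,E)$ be a $\lambda$-civilized unit disk graph, and let $YY_k$ be the Yao-Yao graph of $G$ (defined in the context). Then for every real $t\ge \frac{\lambda}{(\lambda+1)(\cos\theta-\sin\theta)-1}$, the graph $YY_k$ is a length $t$-spanner of $G$.
   Context: Unit disk graph (UDG): $V$ is a finite set of points in the Euclidean plane and $E=\{uv: u,v\in V,\ u\neq v,\ |uv|\le 1\}$, where $|uv|$ is Euclidean distance; $G$ is assumed connected. $G$ is $\lambda$-civilized if no two nodes of $V$ are at distance smaller than $\lambda$. A subgraph $H$ of $G$ on the same vertex set is a length $t$-spanner of $G$ if for all $u,v\in V$ the length (sum of Euclidean edge lengths) of a shortest $uv$-path in $H$ is at most $t$ times the length of a shortest $uv$-path in $G$. Cones: for each point $u$, the plane is partitioned into $k$ cones with apex $u$, each of angle $\theta=2\pi/k$, bounded by $k$ equally spaced rays from $u$ (the same ray directions at every node); each cone is half-open, half-closed. $K_u(v)$ denotes the cone with apex $u$ containing $v$. An edge $uw$ incident to $u$ lies in a cone $K_u$ if $w\in K_u$. Identifiers: each node has a distinct identifier $\mathrm{ID}(u)$. For a directed edge $\overrightarrow{uv}$, $\mathrm{ID}(\overrightarrow{uv})=(|uv|,\mathrm{ID}(u),\mathrm{ID}(v))$, compared lexicographically; for an undirected edge, $\mathrm{ID}(uv)=\min\{\mathrm{ID}(\overrightarrow{uv}),\mathrm{ID}(\overrightarrow{vu})\}$.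 Yao step: $E_Y=\emptyset$; for each node $u$ and each cone $K_u$ such that some edge of $E$ incident to $u$ lies in $K_u$, pick the edge $uv$ of $E$ lying in $K_u$ with lowest $\mathrm{ID}(uv)$ and add the directed edge $\overrightarrow{uv}$ to $E_Y$. The Yao graph is $Y_k=(V,E_Y)$. Reverse Yao step: start with $E_{YY}=E_Y$; for each node $v$ and each cone $K_v$, among all edges $\overrightarrow{uv}\in E_Y$ with sink $v$ and $u\in K_v$, delete all from $E_{YY}$ except the one with smallest ID. The Yao-Yao graph $YY_k=(V,E_{YY})$ is viewed as an undirected graph. *)

From Stdlib Require Import Reals Lra List.
Open Scope R_scope.

Definition point : Type := (R * R)%type.

Definition dist (p q : point) : R :=
  sqrt ((fst p - fst q) ^ 2 + (snd p - snd q) ^ 2).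

Definition udg_edge (pts : list point) (u v : point) : Prop :=
  In u pts /\ In v pts /\ u <> v /\ dist u v <= 1.

Inductive walk (E : point -> point -> Prop) : point -> point -> R -> Prop :=
| walk_nil : forall u, walk E u u 0
| walk_cons : forall u w v L, E u w -> walk E w v L -> walk E u v (dist u w + L).

Definition connected (pts : list point) : Prop :=
  forall u v, In u pts -> In v pts -> exists L, walk (udg_edge pts) u v L.

Definition civilized (lam : R) (pts : list point) : Prop :=
  forall u v, In u pts -> In v pts -> u <> v -> lam <= dist u v.

(** H is a length t-spanner of G (both on vertex set pts): for all u, v the
    shortest uv-path in H has length at most t times the shortest in G;
    stated as: every G-walk of length L from u to v is matched by an H-walk
    of length at most t*L. *)
Definition length_spanner (pts : list point) (G H : point -> point -> Prop) (t : R) : Prop :=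
  forall u v, In u pts -> In v pts ->
    forall L, walk G u v L -> exists L', walk H u v L' /\ L' <= t * L.

Definition theta (k : nat) : R := 2 * PI / INR k.

Definition in_cone (k : nat) (alpha : R) (i : nat) (u w : point) : Prop :=
  exists r phi, 0 < r /\
    alpha + INR i * theta k <= phi < alpha + INR (S i) * theta k /\
    fst w - fst u = r * cos phi /\ snd w - snd u = r * sin phi.

Definition same_cone (k : nat) (alpha : R) (u v w : point) : Prop :=
  exists i, (i < k)%nat /\ in_cone k alpha i u v /\ in_cone k alpha i u w.

Definition eid : Type := (R * nat * nat)%type.

Definition lex_lt (a b : eid) : Prop :=
  let '(d1, i1, j1) := a in let '(d2, i2, j2) := b in
  d1 < d2 \/ (d1 = d2 /\ (i1 < i2)%nat) \/ (d1 = d2 /\ i1 = i2 /\ (j1 < j2)%nat).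

Definition lex_ltb (a b : eid) : bool :=
  let '(d1, i1, j1) := a in let '(d2, i2, j2) := b in
  if Rlt_dec d1 d2 then true
  else if Req_EM_T d1 d2 then
    (Nat.ltb i1 i2 || (Nat.eqb i1 i2 && Nat.ltb j1 j2))%bool
  else false.

Definition lex_le (a b : eid) : Prop := a = b \/ lex_lt a b.

Definition lex_min (a b : eid) : eid := if lex_ltb a b then a else b.

Definition did (ID : point -> nat) (u v : point) : eid := (dist u v, ID u, ID v).
Definition uid (ID : point -> nat) (u v : point) : eid := lex_min (did ID u v) (did ID v u).

Definition yao_edge (pts : list point) (k : nat) (alpha : R) (ID : point -> nat)
  (u v : point) : Prop :=
  udg_edge pts u v /\
  forall w, udg_edge pts u w -> same_cone k alpha u v w -> lex_le (uid ID u v) (uid ID u w).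

Definition yy_dedge (pts : list point) (k : nat) (alpha : R) (ID : point -> nat)
  (u v : point) : Prop :=
  yao_edge pts k alpha ID u v /\
  forall u', yao_edge pts k alpha ID u' v -> same_cone k alpha v u u' ->
    lex_le (uid ID u v) (uid ID u' v).

Definition yy_edge (pts : list point) (k : nat) (alpha : R) (ID : point -> nat)
  (u v : point) : Prop :=
  yy_dedge pts k alpha ID u v \/ yy_dedge pts k alpha ID v u.

(* Let c = cos θ - sin θ.  If a and b lie in one cone with apex p and |pa| <= |pb|,
   the law of cosines gives |ab| <= |pb| - c |pa|.  For a UDG edge uv, let w be the
   Yao choice of u in the cone of v and x the reverse-Yao survivor of the Yao edges
   into w in the cone of u, so that xw is a Yao-Yao edge.  Then
   |ux| <= |uw| - c |xw| and |wv| <= |uv| - c |uw| are both shorter than |uv|, and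
   induction on the distance (over the finitely many pairs of points) bounds the walk
   u ~> x -> w ~> v by t |uv| + t (1 - c) |uw| + (1 - t c) |xw|
   <= t |uv| + t (1 - c) + (1 - t c) λ <= t |uv|, by |uw| <= 1, |xw| >= λ and the
   choice of t. *)

From Pilot Require Import Defs.
From Stdlib Require Import Reals Lra Lia List Classical.
Open Scope R_scope.

(* [Reals] also exports the metric-space projection [dist]. *)
Local Notation dist := Defs.dist.

Lemma dist_sym p q : dist p q = dist q p.
Proof. unfold dist. f_equal. ring. Qed.

Lemma dist_nonneg p q : 0 <= dist p q.
Proof. apply sqrt_pos. Qed.

Lemma dist_refl p : dist p p = 0.
Proof.
  unfold dist. replace ((fst p - fst p) ^ 2 + (snd p - snd p) ^ 2) with 0 by ring.
  apply sqrt_0.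
Qed.

Lemma dist_pos p q : p <> q -> 0 < dist p q.
Proof.
  intros Hpq. destruct (dist_nonneg p q) as [|Hd]; [assumption|exfalso; apply Hpq].
  destruct p as [a b], q as [c d]. unfold dist in Hd. cbn [fst snd] in Hd.
  symmetry in Hd. apply sqrt_eq_0 in Hd; [|apply Rplus_le_le_0_compat; apply pow2_ge_0].
  rewrite <- !Rsqr_pow2 in Hd. apply Rplus_sqr_eq_0 in Hd. f_equal; lra.
Qed.

Lemma dist_polar p q r phi : 0 < r ->
  fst q - fst p = r * cos phi -> snd q - snd p = r * sin phi -> dist p q = r.
Proof.
  intros Hr Ex Ey. unfold dist.
  replace (fst p - fst q) with (- (r * cos phi)) by lra.
  replace (snd p - snd q) with (- (r * sin phi)) by lra.
  replace ((- (r * cos phi)) ^ 2 + (- (r * sin phi)) ^ 2)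
    with (r ^ 2 * (sin phi ^ 2 + cos phi ^ 2)) by ring.
  rewrite <- (Rsqr_pow2 (sin phi)), <- (Rsqr_pow2 (cos phi)), sin2_cos2, Rmult_1_r.
  apply sqrt_pow2. lra.
Qed.

Lemma polar_angle p q : p <> q -> exists phi,
  fst q - fst p = dist p q * cos phi /\ snd q - snd p = dist p q * sin phi.
Proof.
  intros Hpq. assert (Hr := dist_pos p q Hpq).
  set (r := dist p q) in *. set (x := fst q - fst p). set (y := snd q - snd p).
  assert (Er : r * r = x * x + y * y).
  { unfold r, dist. rewrite sqrt_sqrt; [unfold x, y; ring|apply Rplus_le_le_0_compat; apply pow2_ge_0]. }
  assert (Hb : -1 <= x / r <= 1).
  { split; apply (Rmult_le_reg_r r); try lra;
      unfold Rdiv; rewrite Rmult_assoc, Rinv_l by lra; nra. }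
  assert (Ec : cos (acos (x / r)) = x / r) by (apply cos_acos; exact Hb).
  assert (Es : sin (acos (x / r)) = Rabs y / r).
  { rewrite sin_acos by exact Hb.
    replace (1 - (x / r)²) with ((Rabs y / r)²).
    - apply sqrt_Rsqr. apply Rmult_le_pos; [apply Rabs_pos|left; apply Rinv_0_lt_compat; lra].
    - unfold Rsqr.
      replace (Rabs y / r * (Rabs y / r)) with (Rabs y * Rabs y / (r * r)) by (field; lra).
      rewrite <- Rabs_mult, Rabs_right by nra.
      replace (y * y) with (r * r - x * x) by lra. field. lra. }
  destruct (Rle_dec 0 y) as [Hy|Hy].
  - exists (acos (x / r)). rewrite Ec, Es, Rabs_right by lra. split; field; lra.
  - exists (- acos (x / r)). rewrite cos_neg, sin_neg, Ec, Es, Rabs_left by lra.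
    split; field; lra.
Qed.

Lemma exists_slot p n x : 0 < p -> 0 <= x < INR n * p ->
  exists i, (i < n)%nat /\ INR i * p <= x < INR (S i) * p.
Proof.
  intros Hp. revert x. induction n as [|n IH]; intros x [Hx0 Hxn]; [simpl in Hxn; lra|].
  destruct (Rlt_dec x (INR n * p)) as [Hl|Hl].
  - destruct (IH x (conj Hx0 Hl)) as [i [Hi Hslot]]. exists i. split; [lia|exact Hslot].
  - exists n. split; [lia|lra].
Qed.

Lemma angle_in_window alpha phi : exists phi',
  alpha <= phi' < alpha + 2 * PI /\ cos phi' = cos phi /\ sin phi' = sin phi.
Proof.
  assert (HPI := PI_RGT_0).
  destruct (INR_archimed (2 * PI) (alpha - phi)) as [n Hn]; [lra|].
  set (phi1 := phi + 2 * INR n * PI).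
  destruct (INR_archimed (2 * PI) (phi1 - alpha)) as [m Hm]; [lra|].
  destruct (exists_slot (2 * PI) m (phi1 - alpha)) as [i [_ [Hi1 Hi2]]];
    [lra|split; [unfold phi1; lra|lra]|].
  rewrite S_INR in Hi2.
  exists (phi1 - 2 * INR i * PI). split; [lra|].
  rewrite <- (cos_period _ i), <- (sin_period _ i).
  replace (phi1 - 2 * INR i * PI + 2 * INR i * PI) with phi1 by ring.
  unfold phi1. rewrite cos_period, sin_period. split; reflexivity.
Qed.

Lemma theta_pos k : (0 < k)%nat -> 0 < theta k.
Proof.
  intros Hk. apply Rdiv_lt_0_compat; [apply Rmult_lt_0_compat; [lra|apply PI_RGT_0]|].
  apply lt_0_INR. exact Hk.
Qed.

Lemma INR_mul_theta k : (0 < k)%nat -> INR k * theta k = 2 * PI.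
Proof. intros Hk. unfold theta. field. apply not_0_INR. lia. Qed.

Lemma theta_le_PI k : (1 < k)%nat -> theta k <= PI.
Proof.
  intros Hk. assert (HPI := PI_RGT_0).
  assert (H2 : 2 <= INR k) by (replace 2 with (INR 2) by reflexivity; apply le_INR; lia).
  unfold theta. apply Rmult_le_reg_r with (INR k); [lra|].
  unfold Rdiv. rewrite Rmult_assoc, Rinv_l by lra. nra.
Qed.

Lemma cos_sub_sin_theta_le_1 k : (1 < k)%nat -> cos (theta k) - sin (theta k) <= 1.
Proof.
  intros Hk. assert (Hth := theta_pos k ltac:(lia)).
  assert (Hsin := sin_ge_0 _ (Rlt_le _ _ Hth) (theta_le_PI k Hk)).
  assert (Hcos := COS_bound (theta k)). lra.
Qed.

Lemma cone_exists k alpha p q : (0 < k)%nat -> p <> q ->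
  exists i, (i < k)%nat /\ in_cone k alpha i p q.
Proof.
  intros Hk Hpq. assert (Hth := theta_pos k Hk). assert (Hk2 := INR_mul_theta k Hk).
  destruct (polar_angle p q Hpq) as [phi [Ex Ey]].
  destruct (angle_in_window alpha phi) as [phi' [Hw [Hc Hs]]].
  destruct (exists_slot (theta k) k (phi' - alpha)) as [i [Hi Hslot]]; [exact Hth|lra|].
  exists i. split; [exact Hi|].
  exists (dist p q), phi'. split; [apply dist_pos, Hpq|].
  rewrite Hc, Hs. split; [lra|split; assumption].
Qed.

Lemma cone_unique k alpha p q i j : (0 < k)%nat -> (i < k)%nat -> (j < k)%nat ->
  in_cone k alpha i p q -> in_cone k alpha j p q -> i = j.
Proof.
  intros Hk. assert (Hth := theta_pos k Hk). assert (Hk2 := INR_mul_theta k Hk).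
  assert (HPI := PI_RGT_0).
  assert (Hlt : forall i j, (i < j)%nat -> (j < k)%nat ->
    in_cone k alpha i p q -> in_cone k alpha j p q -> False).
  { clear i j. intros i j Hij Hj [r1 [f1 [Hr1 [[A1 A2] [E1 E2]]]]]
      [r2 [f2 [Hr2 [[B1 B2] [F1 F2]]]]].
    assert (R1 := dist_polar p q r1 f1 Hr1 E1 E2).
    assert (R2 := dist_polar p q r2 f2 Hr2 F1 F2).
    rewrite <- R1 in E1, E2, Hr1. rewrite <- R2 in F1, F2.
    assert (Hc : cos f1 = cos f2) by (apply (Rmult_eq_reg_l (dist p q)); lra).
    assert (Hs : sin f1 = sin f2) by (apply (Rmult_eq_reg_l (dist p q)); lra).
    assert (Hd1 : 0 < f2 - f1).
    { assert (INR (S i) * theta k <= INR j * theta k)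
        by (apply Rmult_le_compat_r; [lra|apply le_INR; lia]). lra. }
    assert (Hd2 : f2 - f1 < 2 * PI).
    { assert (INR (S j) * theta k <= INR k * theta k)
        by (apply Rmult_le_compat_r; [lra|apply le_INR; lia]).
      assert (0 <= INR i * theta k) by (apply Rmult_le_pos; [apply pos_INR|lra]). lra. }
    assert (Hcd : cos (f2 - f1) = 1).
    { rewrite cos_minus, <- Hc, <- Hs. assert (H := sin2_cos2 f1). unfold Rsqr in H. lra. }
    assert (Hsd : sin (f2 - f1) = 0) by (rewrite sin_minus, <- Hc, <- Hs; ring).
    destruct (Rtotal_order (f2 - f1) PI) as [L|[L|L]].
    - assert (H := sin_gt_0 _ Hd1 L). lra.
    - rewrite L, cos_PI in Hcd. lra.
    - assert (H := sin_lt_0 _ L Hd2). lra. }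
  intros Hi Hj Ci Cj. destruct (Nat.lt_total i j) as [L|[L|L]]; [|exact L|];
    exfalso; eauto.
Qed.

Lemma same_cone_refl k alpha p q : (0 < k)%nat -> p <> q -> same_cone k alpha p q q.
Proof.
  intros Hk Hpq. destruct (cone_exists k alpha p q Hk Hpq) as [i [Hi C]].
  exists i. auto.
Qed.

Lemma same_cone_sym k alpha p a b : same_cone k alpha p a b -> same_cone k alpha p b a.
Proof. intros [i [Hi [A B]]]. exists i. auto. Qed.

Lemma same_cone_trans k alpha p a b c : (0 < k)%nat ->
  same_cone k alpha p a b -> same_cone k alpha p b c -> same_cone k alpha p a c.
Proof.
  intros Hk [i [Hi [A B]]] [j [Hj [B' C]]].
  assert (i = j) by (eapply cone_unique; eauto). subst j.
  exists i. auto.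
Qed.

Lemma law_of_cosines p a b r1 r2 f1 f2 :
  fst a - fst p = r1 * cos f1 -> snd a - snd p = r1 * sin f1 ->
  fst b - fst p = r2 * cos f2 -> snd b - snd p = r2 * sin f2 ->
  (fst a - fst b) ^ 2 + (snd a - snd b) ^ 2 = r1 ^ 2 + r2 ^ 2 - 2 * r1 * r2 * cos (f1 - f2).
Proof.
  intros E1 E2 F1 F2.
  replace (fst a - fst b) with (r1 * cos f1 - r2 * cos f2) by lra.
  replace (snd a - snd b) with (r1 * sin f1 - r2 * sin f2) by lra.
  rewrite cos_minus. assert (H1 := sin2_cos2 f1). assert (H2 := sin2_cos2 f2).
  unfold Rsqr in *. nra.
Qed.

Lemma cos_le_of_Rabs_lt th d : Rabs d < th -> th <= PI -> cos th <= cos d.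
Proof.
  intros Hd Hth.
  replace (cos d) with (cos (Rabs d))
    by (unfold Rabs; destruct (Rcase_abs d); [apply cos_neg|reflexivity]).
  left. assert (Hd0 := Rabs_pos d). apply cos_decreasing_1; lra.
Qed.

Lemma same_cone_dist k alpha p a b : (1 < k)%nat ->
  same_cone k alpha p a b -> dist p a <= dist p b ->
  dist a b <= dist p b - (cos (theta k) - sin (theta k)) * dist p a.
Proof.
  intros Hk [i [_ [[r1 [f1 [Hr1 [[A1 A2] [E1 E2]]]]] [r2 [f2 [Hr2 [[B1 B2] [F1 F2]]]]]]]] Hle.
  rewrite (dist_polar p a r1 f1 Hr1 E1 E2), (dist_polar p b r2 f2 Hr2 F1 F2) in *.
  assert (Hth := theta_pos k ltac:(lia)). assert (HthPI := theta_le_PI k Hk).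
  rewrite S_INR in A2, B2.
  assert (Hcos : cos (theta k) <= cos (f1 - f2))
    by (apply cos_le_of_Rabs_lt; [apply Rabs_def1; nra|exact HthPI]).
  assert (Hsin := sin_ge_0 _ (Rlt_le _ _ Hth) HthPI).
  assert (Hcs := sin2_cos2 (theta k)). unfold Rsqr in Hcs.
  set (C := cos (theta k)) in *. set (S := sin (theta k)) in *.
  assert (HC1 : C <= 1) by nra.
  assert (Hrhs : 0 <= r2 - (C - S) * r1) by nra.
  unfold dist at 1. rewrite (law_of_cosines p a b r1 r2 f1 f2) by assumption.
  rewrite <- (sqrt_pow2 _ Hrhs). apply sqrt_le_1_alt.
  (* the slack is 2 S r1 (r2 - C r1) >= 0, using C^2 + S^2 = 1 *)
  assert (0 <= S * r1 * (r2 - C * r1)) by (apply Rmult_le_pos; nra).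
  assert (r1 * r2 * C <= r1 * r2 * cos (f1 - f2)) by (apply Rmult_le_compat_l; nra).
  nra.
Qed.

Lemma lex_le_total a b : lex_le a b \/ lex_le b a.
Proof.
  destruct a as [[d1 i1] j1], b as [[d2 i2] j2]. unfold lex_le, lex_lt.
  destruct (Rtotal_order d1 d2) as [H|[<-|H]]; [tauto| |tauto].
  destruct (Nat.lt_total i1 i2) as [H|[<-|H]]; [tauto| |tauto].
  destruct (Nat.lt_total j1 j2) as [H|[<-|H]]; tauto.
Qed.

Lemma lex_le_trans a b c : lex_le a b -> lex_le b c -> lex_le a c.
Proof.
  destruct a as [[d1 i1] j1], b as [[d2 i2] j2], c as [[d3 i3] j3].
  unfold lex_le, lex_lt.
  intros [Hab|Hab] [Hbc|Hbc]; try (injection Hab as -> -> ->); try (injection Hbc as -> -> ->);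
    [left; reflexivity|right; exact Hbc|right; exact Hab|right].
  destruct Hab as [H|[[? H]|[? [? H]]]]; destruct Hbc as [H'|[[? H']|[? [? H']]]]; subst;
    first [left; lra | right; left; split; [reflexivity|lia]
          | right; right; split; [reflexivity|split; [reflexivity|lia]]].
Qed.

Lemma uid_dist ID u v : fst (fst (uid ID u v)) = dist u v.
Proof. unfold uid, lex_min, did. destruct (lex_ltb _ _); [reflexivity|apply dist_sym]. Qed.

Lemma lex_le_uid_dist ID u v u' v' :
  lex_le (uid ID u v) (uid ID u' v') -> dist u v <= dist u' v'.
Proof.
  rewrite <- (uid_dist ID u v), <- (uid_dist ID u' v').
  destruct (uid ID u v) as [[d1 i1] j1], (uid ID u' v') as [[d2 i2] j2].
  unfold lex_le, lex_lt. simpl. intros [H|[H|[[-> _]|[-> _]]]]; [injection H; lra|lra|lra|lra].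
Qed.

Lemma exists_lex_minimizer (f : point -> eid) (P : point -> Prop) (l : list point) :
  (exists x, In x l /\ P x) ->
  exists m, In m l /\ P m /\ forall y, In y l -> P y -> lex_le (f m) (f y).
Proof.
  induction l as [|a l IH]; intros [x [Hx Px]]; [destruct Hx|].
  destruct (classic (exists x, In x l /\ P x)) as [Hl|Hl].
  - destruct (IH Hl) as [m [Hm [Pm Hmin]]].
    destruct (classic (P a /\ lex_le (f a) (f m))) as [[Pa Ham]|Ham].
    + exists a. split; [left; reflexivity|split; [exact Pa|]].
      intros y [<-|Hy] Py; [left; reflexivity|eapply lex_le_trans; eauto].
    + exists m. split; [right; exact Hm|split; [exact Pm|]].
      intros y [<-|Hy] Py; [|auto].
      destruct (lex_le_total (f m) (f a)) as [|Ham']; [assumption|tauto].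
  - destruct Hx as [<-|Hx]; [|exfalso; eauto].
    exists a. split; [left; reflexivity|split; [exact Px|]].
    intros y [<-|Hy] Py; [left; reflexivity|exfalso; eauto].
Qed.

Lemma walk_cat E a b c L1 L2 : walk E a b L1 -> walk E b c L2 -> walk E a c (L1 + L2).
Proof.
  intros W1 W2. induction W1 as [u|u w v L Euw W IH].
  - rewrite Rplus_0_l. exact W2.
  - rewrite Rplus_assoc. constructor; [exact Euw|exact (IH W2)].
Qed.

Lemma filter_length_lt {A} (p q : A -> bool) (l : list A) :
  (forall z, p z = true -> q z = true) ->
  (exists z, In z l /\ p z = false /\ q z = true) ->
  (length (filter p l) < length (filter q l))%nat.
Proof.
  intros Hpq.
  assert (Hle : forall l, (length (filter p l) <= length (filter q l))%nat).
  { induction l0 as [|b l0 IH]; simpl; [lia|].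
    destruct (p b) eqn:E; [rewrite (Hpq b E); simpl; lia|]. destruct (q b); simpl; lia. }
  induction l as [|a l IH]; intros [z [Hz [Pz Qz]]]; [destruct Hz|]. simpl.
  destruct Hz as [<-|Hz].
  - rewrite Pz, Qz. simpl. specialize (Hle l). lia.
  - specialize (IH (ex_intro _ z (conj Hz (conj Pz Qz)))).
    destruct (p a) eqn:E; [rewrite (Hpq a E); simpl; lia|]. destruct (q a); simpl; lia.
Qed.

Definition closer_pairs (pts : list point) (d : R) : nat :=
  length (filter (fun pq : point * point => if Rlt_dec (dist (fst pq) (snd pq)) d then true else false)
    (list_prod pts pts)).

Lemma closer_pairs_lt pts x y d : In x pts -> In y pts -> dist x y < d ->
  (closer_pairs pts (dist x y) < closer_pairs pts d)%nat.
Proof.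
  intros Hx Hy Hd. apply filter_length_lt.
  - intros [a b]. simpl. destruct (Rlt_dec (dist a b) (dist x y)); [|discriminate].
    destruct (Rlt_dec (dist a b) d); [reflexivity|lra].
  - exists (x, y). split; [apply in_prod; assumption|]. simpl.
    destruct (Rlt_dec (dist x y) (dist x y)); [lra|].
    destruct (Rlt_dec (dist x y) d); [split; reflexivity|lra].
Qed.

Section YaoYao.
Variables (k : nat) (alpha : R) (pts : list point) (ID : point -> nat).
Hypothesis Hk : (1 < k)%nat.

Let Hk0 : (0 < k)%nat. Proof. lia. Qed.

Lemma yao_edge_in_cone u v : udg_edge pts u v ->
  exists w, yao_edge pts k alpha ID u w /\ same_cone k alpha u v w.
Proof.
  intros Euv. pose proof Euv as [Hu [Hv [Huv _]]].
  destruct (exists_lex_minimizer (uid ID u)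
      (fun w => udg_edge pts u w /\ same_cone k alpha u v w) pts)
    as [w [_ [[Euw Cvw] Hmin]]].
  { exists v. split; [exact Hv|split; [exact Euv|apply same_cone_refl; assumption]]. }
  exists w. split; [|exact Cvw]. split; [exact Euw|].
  intros w' Euw' Cww'. apply Hmin; [apply Euw'|].
  split; [exact Euw'|eapply same_cone_trans; eassumption].
Qed.

Lemma yy_dedge_in_cone u w : yao_edge pts k alpha ID u w ->
  exists x, yy_dedge pts k alpha ID x w /\ same_cone k alpha w u x.
Proof.
  intros Yuw. pose proof Yuw as [[Hu [_ [Huw _]]] _].
  destruct (exists_lex_minimizer (fun x => uid ID x w)
      (fun x => yao_edge pts k alpha ID x w /\ same_cone k alpha w u x) pts)
    as [x [_ [[Yxw Cux] Hmin]]].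
  { exists u. split; [exact Hu|split; [exact Yuw|apply same_cone_refl; congruence]]. }
  exists x. split; [|exact Cux]. split; [exact Yxw|].
  intros x' Yx'w Cxx'. apply Hmin; [apply Yx'w|].
  split; [exact Yx'w|eapply same_cone_trans; eassumption].
Qed.

Let c := cos (theta k) - sin (theta k).

Lemma yy_detour u v : udg_edge pts u v ->
  exists w x, udg_edge pts u w /\ udg_edge pts x w /\ yy_edge pts k alpha ID x w /\
    dist u x <= dist u w - c * dist x w /\ dist w v <= dist u v - c * dist u w.
Proof.
  intros Euv.
  destruct (yao_edge_in_cone u v Euv) as [w [Yuw Cvw]].
  destruct (yy_dedge_in_cone u w Yuw) as [x [YYxw Cux]].
  assert (Hwv : dist u w <= dist u v).
  { apply (lex_le_uid_dist ID). apply Yuw; [exact Euv|apply same_cone_sym, Cvw]. }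
  assert (Hxw : dist w x <= dist w u).
  { rewrite (dist_sym w x), (dist_sym w u). apply (lex_le_uid_dist ID).
    apply YYxw; [exact Yuw|apply same_cone_sym, Cux]. }
  exists w, x. split; [apply Yuw|split; [apply YYxw|split; [left; exact YYxw|split]]].
  - rewrite (dist_sym u x), (dist_sym u w), (dist_sym x w).
    apply (same_cone_dist k alpha); [exact Hk|apply same_cone_sym, Cux|exact Hxw].
  - apply (same_cone_dist k alpha); [exact Hk|apply same_cone_sym, Cvw|exact Hwv].
Qed.

Variables (lam t : R).
Hypothesis Hlam : 0 < lam.
Hypothesis Hciv : civilized lam pts.
Hypothesis Hc : 1 < (lam + 1) * c.
Hypothesis Ht : lam <= t * ((lam + 1) * c - 1).

Lemma yy_walk_of_short_pair n : forall u v, closer_pairs pts (dist u v) = n ->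
  In u pts -> In v pts -> dist u v <= 1 ->
  exists L, walk (yy_edge pts k alpha ID) u v L /\ L <= t * dist u v.
Proof.
  assert (Hc1 : c <= 1) by apply (cos_sub_sin_theta_le_1 k Hk).
  assert (Hc0 : 0 < c) by nra.
  assert (Ht0 : 0 < t) by nra.
  assert (Htc : 1 <= t * c) by nra.
  induction n as [n IH] using (well_founded_induction Wf_nat.lt_wf).
  intros u v Hn Hu Hv Huv1. subst n.
  destruct (classic (u = v)) as [<-|Huv].
  { exists 0. split; [constructor|rewrite dist_refl; lra]. }
  destruct (yy_detour u v (conj Hu (conj Hv (conj Huv Huv1))))
    as [w [x [[_ [Hw [Huw Huw1]]] [[Hx [_ [Hxw _]]] [YYxw [Hux Hwv]]]]]].
  assert (Hlxw : lam <= dist x w) by (apply Hciv; assumption).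
  assert (Hpxw := dist_pos x w Hxw). assert (Hpuw := dist_pos u w Huw).
  assert (Hnux := dist_nonneg u x). assert (Hnwv := dist_nonneg w v).
  destruct (IH _ (closer_pairs_lt pts u x (dist u v) Hu Hx ltac:(nra)) u x eq_refl Hu Hx
    ltac:(nra)) as [L1 [W1 HL1]].
  destruct (IH _ (closer_pairs_lt pts w v (dist u v) Hw Hv ltac:(nra)) w v eq_refl Hw Hv
    ltac:(nra)) as [L2 [W2 HL2]].
  exists (L1 + (dist x w + L2)). split.
  - apply walk_cat with x; [exact W1|constructor; assumption].
  - assert (t * dist u x <= t * (dist u w - c * dist x w)) by (apply Rmult_le_compat_l; lra).
    assert (t * dist w v <= t * (dist u v - c * dist u w)) by (apply Rmult_le_compat_l; lra).
    assert (t * (1 - c) * dist u w <= t * (1 - c) * 1)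
      by (apply Rmult_le_compat_l; [apply Rmult_le_pos|]; lra).
    assert ((1 - t * c) * dist x w <= (1 - t * c) * lam)
      by (apply Rmult_le_compat_neg_l; lra).
    nra.
Qed.

End YaoYao.

Theorem theorem1 (k : nat) (lam : R) (alpha : R) (pts : list point)
  (ID : point -> nat) (t : R) :
  (8 < k)%nat ->
  0 < lam ->
  cos (theta k) - sin (theta k) > 1 / (lam + 1) ->
  (forall u v, In u pts -> In v pts -> ID u = ID v -> u = v) ->
  civilized lam pts ->
  connected pts ->
  t >= lam / ((lam + 1) * (cos (theta k) - sin (theta k)) - 1) ->
  length_spanner pts (udg_edge pts) (yy_edge pts k alpha ID) t.
Proof.
  intros Hk Hlam Hc _ Hciv _ Ht.
  set (c := cos (theta k) - sin (theta k)) in *.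
  assert (Hc' : 1 < (lam + 1) * c).
  { apply Rmult_lt_compat_l with (r := lam + 1) in Hc; [|lra].
    replace ((lam + 1) * (1 / (lam + 1))) with 1 in Hc by (field; lra). exact Hc. }
  assert (Ht' : lam <= t * ((lam + 1) * c - 1)).
  { apply Rge_le, Rmult_le_compat_r with (r := (lam + 1) * c - 1) in Ht; [|lra].
    replace (lam / ((lam + 1) * c - 1) * ((lam + 1) * c - 1)) with lam in Ht
      by (field; lra). exact Ht. }
  intros u v _ _ L W. induction W as [u|u w v L Euw W IH].
  - exists 0. split; [constructor|lra].
  - destruct Euw as [Hu [Hw [_ Huw1]]].
    destruct (yy_walk_of_short_pair k alpha pts ID ltac:(lia) lam t Hlam Hciv Hc' Ht'
      _ u w eq_refl Hu Hw Huw1) as [L1 [W1 HL1]].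
    destruct IH as [L2 [W2 HL2]].
    exists (L1 + L2). split; [eapply walk_cat; eassumption|lra].
Qed.
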